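(* Let $m,n\in\mathbb{N}$, let $\Gamma:\ell^2(\mathbb{R}^n)\to\ell^1(\mathbb{R}^m)$ be linear and bounded, and let $J(u)=\|\Gamma u\|_{\ell^1(\mathbb{R}^m)}$ for $u\in\ell^2(\mathbb{R}^n)$. Let $u_\alpha\in\ell^2(\mathbb{R}^n)$, let $q_\alpha\in\partial\|\cdot\|_{\ell^1(\mathbb{R}^m)}(\Gamma u_\alpha)$ and $p_\alpha=\Gamma^*q_\alpha$. Then for every $u\in\ell^2(\mathbb{R}^n)$, $$\mathrm{ICB}^{q_\alpha}_{\ell^1(\mathbb{R}^m)}(\Gamma u,\Gamma u_\alpha)\le \mathrm{ICB}^{p_\alpha}_J(u,u_\alpha).$$
   Context: $\ell^p(\mathbb{R}^d)$ is the space of sequences $(x_i)_{i\in\mathbb{N}}$, $x_i\in\mathbb{R}^d$, with $\sum_i|x_i|^p<\infty$ ($|\cdot|$ Euclidean norm), and $\|x\|_{\ell^1(\mathbb{R}^m)}=\sum_i|x_i|$. For a convex functional $F$ with $q\in\partial F(w)$, the Bregman distance is $D_F^q(x,w)=F(x)-F(w)-\langle q,x-w\rangle$, and $\mathrm{ICB}^q_F(x,w)=\inf_{z}\big(D_F^q(x-z,w)+D_F^{-q}(z,-w)\big)$, the infimum being over $z$ in the domain space of $F$ (here $\ell^2(\mathbb{R}^n)$ for $F=J$ and $\ell^1(\mathbb{R}^m)$ for $F=\|\cdot\|_{\ell^1(\mathbb{R}^m)}$). *)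

From HB Require Import structures.
From mathcomp Require Import all_boot all_order all_algebra.
From mathcomp Require Import all_classical all_reals all_analysis.
Set Implicit Arguments. Unset Strict Implicit. Unset Printing Implicit Defensive.
Import Order.TTheory GRing.Theory Num.Theory.
Import numFieldNormedType.Exports.
Local Open Scope ring_scope.
Local Open Scope classical_set_scope.

Section Defs.
Variable R : realType.

Definition seqv (d : nat) := nat -> 'rV[R]_d.

Definition eucl (d : nat) (v : 'rV[R]_d) : R := Num.sqrt (\sum_(j < d) v ord0 j ^+ 2).

Definition in_l1 d (x : seqv d) : Prop := cvgn (series (fun i => eucl (x i))).
Definition in_l2 d (x : seqv d) : Prop := cvgn (series (fun i => eucl (x i) ^+ 2)).
Definition l1norm d (x : seqv d) : R := limn (series (fun i => eucl (x i))).
Definition l2norm d (x : seqv d) : R := Num.sqrt (limn (series (fun i => eucl (x i) ^+ 2))).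

Definition sadd d (x y : seqv d) : seqv d := fun i => x i + y i.
Definition sopp d (x : seqv d) : seqv d := fun i => - x i.
Definition ssub d (x y : seqv d) : seqv d := fun i => x i - y i.
Definition sscale d (a : R) (x : seqv d) : seqv d := fun i => a *: x i.

Definition bounded_linear d e (dom : seqv d -> Prop) (N1 : seqv d -> R)
  (cod : seqv e -> Prop) (N2 : seqv e -> R) (G : seqv d -> seqv e) : Prop :=
  (forall u, dom u -> cod (G u)) /\
  (forall a u v, dom u -> dom v -> G (sadd (sscale a u) v) = sadd (sscale a (G u)) (G v)) /\
  (exists C : R, forall u, dom u -> N2 (G u) <= C * N1 u).

Definition dual_elt d (dom : seqv d -> Prop) (N : seqv d -> R) (q : seqv d -> R) : Prop :=
  (forall a u v, dom u -> dom v -> q (sadd (sscale a u) v) = a * q u + q v) /\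
  (exists C : R, forall u, dom u -> `|q u| <= C * N u).

Definition subdiff d (dom : seqv d -> Prop) (N : seqv d -> R) (F : seqv d -> R)
  (w : seqv d) (q : seqv d -> R) : Prop :=
  dual_elt dom N q /\ forall x, dom x -> F w + q (ssub x w) <= F x.

Definition bregman d (F : seqv d -> R) (q : seqv d -> R) (x w : seqv d) : R :=
  F x - F w - q (ssub x w).

Definition ICB d (dom : seqv d -> Prop) (F : seqv d -> R) (q : seqv d -> R) (x w : seqv d) : R :=
  inf [set bregman F q (ssub x z) w + bregman F (fun y => - q y) z (sopp w) | z in dom].

(* adjoint: <Gamma^* q, u> = <q, Gamma u> *)
Definition adjoint d e (G : seqv d -> seqv e) (q : seqv e -> R) : seqv d -> R :=
  fun u => q (G u).

End Defs.

(* Both Bregman terms of ICB for J = ||Gamma .||_1 and p = Gamma^* q are, by linearity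
   of Gamma, the corresponding terms for ||.||_1 and q evaluated at the point Gamma z.
   So ICB_J is an infimum over the subset {Gamma z} of the competitors of the l^1
   infimum, hence not smaller than it; the l^1 infimum is finite because both terms are
   nonnegative, q being a subgradient of ||.||_1 at Gamma u_a and, by evenness of the
   norm, -q a subgradient at -Gamma u_a. *)
From HB Require Import structures.
From mathcomp Require Import all_boot all_order all_algebra.
From mathcomp Require Import all_classical all_reals all_analysis.
From mathcomp Require Import lra.
Import Order.TTheory GRing.Theory Num.Theory.
Local Open Scope ring_scope.
Local Open Scope classical_set_scope.

Section SequenceSpaces.
Variable R : realType.

Definition subspace {d} (dom : seqv R d -> Prop) : Prop :=
  forall a u v, dom u -> dom v -> dom (sadd (sscale a u) v).

Definition linear_on {d e} (dom : seqv R d -> Prop) (G : seqv R d -> seqv R e) : Prop :=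
  forall a u v, dom u -> dom v -> G (sadd (sscale a u) v) = sadd (sscale a (G u)) (G v).

Lemma eucl_sq d (v : 'rV[R]_d) : eucl v ^+ 2 = \sum_(j < d) v ord0 j ^+ 2.
Proof. by rewrite /eucl sqr_sqrtr // sumr_ge0 // => j _; rewrite sqr_ge0. Qed.

Lemma eucl_ge0 d (v : 'rV[R]_d) : 0 <= eucl v.
Proof. exact: sqrtr_ge0. Qed.

Lemma coord_le_eucl d (v : 'rV[R]_d) j : `|v ord0 j| <= eucl v.
Proof.
rewrite -sqrtr_sqr /eucl ler_wsqrtr // (bigD1 j) //= lerDl sumr_ge0 // => k _.
by rewrite sqr_ge0.
Qed.

Lemma eucl_le_sum_norm d (v : 'rV[R]_d) : eucl v <= \sum_(j < d) `|v ord0 j|.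
Proof.
have S0 : 0 <= \sum_(j < d) `|v ord0 j| by rewrite sumr_ge0.
rewrite -(ger0_norm S0) -sqrtr_sqr /eucl ler_wsqrtr // expr2 mulr_suml.
apply: ler_sum => j _.
rewrite -[X in X <= _]real_normK ?num_real // expr2 ler_wpM2l //.
by rewrite (bigD1 j) //= lerDl sumr_ge0.
Qed.

(* A crude bound, losing the factor [d], suffices for summability. *)
Lemma eucl_combW d a (x y : 'rV[R]_d) :
  eucl (a *: x + y) <= d%:R * (`|a| * eucl x + eucl y).
Proof.
apply: le_trans; first exact: eucl_le_sum_norm.
rewrite mulr_natl -[X in _ *+ X]card_ord -sumr_const.
apply: ler_sum => j _; rewrite !mxE.
apply: le_trans (ler_normD _ _) _; rewrite normrM.
apply: lerD; last exact: coord_le_eucl.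
by rewrite ler_wpM2l // coord_le_eucl.
Qed.

Lemma eucl_comb_sq d a (x y : 'rV[R]_d) :
  eucl (a *: x + y) ^+ 2 <= 2 * a ^+ 2 * eucl x ^+ 2 + 2 * eucl y ^+ 2.
Proof.
rewrite !eucl_sq !mulr_sumr -big_split /=; apply: ler_sum => j _; rewrite !mxE.
have := sqr_ge0 (a * x ord0 j - y ord0 j); nra.
Qed.

Lemma l1_subspace d : subspace (@in_l1 R d).
Proof.
move=> a x y hx hy; apply: (@series_le_cvg R _
   ((d%:R * `|a|) *: (fun i => eucl (x i)) + d%:R *: (fun i => eucl (y i)))).
- by move=> i; exact: eucl_ge0.
- by move=> i; rewrite /= addr_ge0 // mulr_ge0 // ?mulr_ge0 // eucl_ge0.
- move=> i; rewrite /= /sadd /sscale !fctE.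
  by apply: le_trans; [exact: eucl_combW | rewrite mulrDr mulrA].
- by apply: is_cvg_seriesD; apply: is_cvg_seriesZ.
Qed.

Lemma l2_subspace d : subspace (@in_l2 R d).
Proof.
move=> a x y hx hy; apply: (@series_le_cvg R _
   ((2 * a ^+ 2) *: (fun i => eucl (x i) ^+ 2) + 2 *: (fun i => eucl (y i) ^+ 2))).
- by move=> i; exact: sqr_ge0.
- move=> i; rewrite /= !fctE.
  by apply: addr_ge0; apply: mulr_ge0; rewrite ?sqr_ge0 // mulr_ge0 // sqr_ge0.
- by move=> i; rewrite /= /sadd /sscale !fctE; exact: eucl_comb_sq.
- by apply: is_cvg_seriesD; apply: is_cvg_seriesZ.
Qed.

Lemma ssubE d (x y : seqv R d) : ssub x y = sadd (sscale (-1) y) x.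
Proof. by apply: funext => i; rewrite /ssub /sadd /sscale scaleN1r addrC. Qed.

Lemma soppE d (x : seqv R d) : sopp x = sadd (sscale (-2) x) x.
Proof.
apply: funext => i; rewrite /sopp /sadd /sscale; apply/matrixP => r c; rewrite !mxE.
lra.
Qed.

Lemma l1norm_opp d (x : seqv R d) : l1norm (sopp x) = l1norm x.
Proof.
rewrite /l1norm; congr (limn (series _)); apply: funext => i.
by rewrite /eucl /sopp; congr Num.sqrt; apply: eq_bigr => j _; rewrite mxE sqrrN.
Qed.

End SequenceSpaces.

Arguments subspace {R d}.
Arguments linear_on {R d e}.

Section LinearStructure.
Context {R : realType} {d : nat} {dom : seqv R d -> Prop}.
Hypothesis dom_subspace : subspace dom.

Lemma subspace_sub x y : dom x -> dom y -> dom (ssub x y).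
Proof. by move=> hx hy; rewrite ssubE; apply: dom_subspace. Qed.

Lemma subspace_opp x : dom x -> dom (sopp x).
Proof. by move=> hx; rewrite soppE; apply: dom_subspace. Qed.

Lemma linear_map_sub {e} {G : seqv R d -> seqv R e} :
  linear_on dom G ->
  forall x y, dom x -> dom y -> G (ssub x y) = ssub (G x) (G y).
Proof. by move=> Glin x y hx hy; rewrite !ssubE Glin. Qed.

Lemma linear_map_opp {e} {G : seqv R d -> seqv R e} :
  linear_on dom G ->
  forall x, dom x -> G (sopp x) = sopp (G x).
Proof. by move=> Glin x hx; rewrite !soppE Glin. Qed.

Lemma linear_functional_opp {q : seqv R d -> R} :
  (forall a u v, dom u -> dom v -> q (sadd (sscale a u) v) = a * q u + q v) ->
  forall x, dom x -> q (sopp x) = - q x.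
Proof. by move=> qlin x hx; rewrite soppE qlin //; lra. Qed.

End LinearStructure.

Section Bregman.
Context {R : realType} {d : nat} {dom : seqv R d -> Prop} {N F : seqv R d -> R}.

Lemma bregman_ge0 {w q x} : subdiff dom N F w q -> dom x -> 0 <= bregman F q x w.
Proof. by move=> [_ qsub] hx; rewrite /bregman subr_ge0 lerBrDr addrC qsub. Qed.

Lemma subdiff_even_opp {w q} :
  subspace dom -> (forall x, F (sopp x) = F x) -> dom w ->
  subdiff dom N F w q -> subdiff dom N F (sopp w) (fun y => - q y).
Proof.
move=> hdom Feven hw [[qlin [C qbd]] qsub]; split; first split.
- by move=> a u v hu hv; rewrite qlin //; lra.
- by exists C => u hu; rewrite normrN qbd.
- move=> x hx.
  have shift : sopp (ssub x (sopp w)) = ssub (sopp x) w.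
    by apply: funext => i; rewrite /ssub /sopp opprD opprK.
  have := qsub _ (subspace_opp hdom _ hx).
  rewrite -shift (linear_functional_opp qlin) ?Feven //.
  by apply: subspace_sub => //; apply: subspace_opp.
Qed.

Lemma ICB_lbound0 {w q x} :
  subspace dom -> (forall x, F (sopp x) = F x) -> dom w -> dom x ->
  subdiff dom N F w q ->
  lbound [set bregman F q (ssub x z) w + bregman F (fun y => - q y) z (sopp w)
         | z in dom] 0.
Proof.
move=> hdom Feven hw hx hq _ [z hz <-].
apply: addr_ge0; first exact: bregman_ge0 hq (subspace_sub hdom _ _ hx hz).
exact: bregman_ge0 (subdiff_even_opp hdom Feven hw hq) hz.
Qed.

End Bregman.

Section Composition.
Context {R : realType} {d e : nat}.
Context {dom1 : seqv R d -> Prop} {dom2 : seqv R e -> Prop} {G : seqv R d -> seqv R e}.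
Hypothesis dom1_subspace : subspace dom1.
Hypothesis G_dom : forall u, dom1 u -> dom2 (G u).
Hypothesis G_linear : linear_on dom1 G.

Lemma bregman_comp (F : seqv R e -> R) (q : seqv R e -> R) {x w} :
  dom1 x -> dom1 w ->
  bregman (fun u => F (G u)) (adjoint G q) x w = bregman F q (G x) (G w).
Proof. by move=> hx hw; rewrite /bregman /adjoint (linear_map_sub G_linear). Qed.

Lemma ICB_comp_le {F : seqv R e -> R} {q : seqv R e -> R} {x w} :
  dom1 x -> dom1 w ->
  has_lbound [set bregman F q (ssub (G x) z) (G w)
               + bregman F (fun y => - q y) z (sopp (G w)) | z in dom2] ->
  ICB dom2 F q (G x) (G w) <= ICB dom1 (fun u => F (G u)) (adjoint G q) x w.
Proof.
move=> hx hw hlb; apply: lb_le_inf; first by eexists; exists x.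
move=> _ [z hz <-].
have hsub := subspace_sub dom1_subspace.
have hopp := subspace_opp dom1_subspace.
rewrite (bregman_comp _ _ (hsub _ _ hx hz) hw).
rewrite (bregman_comp F (fun y => - q y) hz (hopp _ hw)).
rewrite (linear_map_sub G_linear) // (linear_map_opp G_linear) //.
by apply: (ge_inf hlb); exists (G z); first exact: G_dom.
Qed.

End Composition.

Theorem theorem5 (R : realType) (m n : nat)
  (Gamma : seqv R n -> seqv R m)
  (HG : bounded_linear (@in_l2 R n) (@l2norm R n) (@in_l1 R m) (@l1norm R m) Gamma)
  (ua : seqv R n) (Hua : in_l2 ua)
  (qa : seqv R m -> R)
  (Hqa : subdiff (@in_l1 R m) (@l1norm R m) (@l1norm R m) (Gamma ua) qa) :
  let J := fun u : seqv R n => l1norm (Gamma u) in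
  let pa := adjoint Gamma qa in
  forall u : seqv R n, in_l2 u ->
    ICB (@in_l1 R m) (@l1norm R m) qa (Gamma u) (Gamma ua)
      <= ICB (@in_l2 R n) J pa u ua.
Proof.
move=> J pa u Hu; case: HG => Gdom [Glin _].
apply: (ICB_comp_le (@l2_subspace R n) Gdom Glin Hu Hua).
exists 0; exact: ICB_lbound0 (@l1_subspace R m) (@l1norm_opp R m)
  (Gdom _ Hua) (Gdom _ Hu) Hqa.
Qed.
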